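(* Consider the two-species symmetric simple exclusion process on $\mathbb{Z}$ (i.e. $p=q=1/2$) with $N-1$ first-class particles and one second-class particle, started from integer positions $y_1<\cdots<y_N$ where the particle at $y_N$ is the second-class particle. Let $\eta(t)$ be the position of the second-class particle at time $t\ge0$. Then for every $x\in\mathbb{Z}$, \[ \mathbb{P}(\eta(t)=x)=\frac{1}{2\pi i}\oint_c \xi^{x-y_N-1}e^{\left(\frac{1}{2\xi}+\frac{\xi}{2}-1\right)t}\,d\xi, \] where $c$ is a counterclockwise circle centered at the origin of small radius.
   Context: Dynamics: each particle independently waits an exponential time with parameter $1$, then attempts to jump one step to the right or to the left, each with probability $1/2$. A jump to an empty site is performed; a first-class particle attempting to jump onto the site of the second-class particle exchanges positions with it; all other jumps onto occupied sites are suppressed. *)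

From Stdlib Require Import Reals ZArith List Lra.
From Coquelicot Require Import Coquelicot.
Import ListNotations.
Open Scope R_scope.

(** A configuration stores the positions of the
    first-class particles and the position of the second-class particle. *)
Record state := mkState { fc : list Z ; sc : Z }.

Definition move_first (s : state) (a d : Z) : state :=
  let target := (a + d)%Z in
  if Z.eq_dec target (sc s) then
    (* exchange with the second-class particle *)
    mkState (map (fun b => if Z.eq_dec b a then sc s else b) (fc s)) a
  else if in_dec Z.eq_dec target (fc s) then s
  else mkState (map (fun b => if Z.eq_dec b a then target else b) (fc s)) (sc s).

Definition move_second (s : state) (d : Z) : state :=
  let target := (sc s + d)%Z in
  if in_dec Z.eq_dec target (fc s) then s
  else mkState (fc s) target.

Definition moves (s : state) : list state :=
  flat_map (fun a => [move_first s a (-1)%Z; move_first s a 1%Z]) (fc s)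
  ++ [move_second s (-1)%Z; move_second s 1%Z].

(** One step of the embedded (uniformized) jump chain, acting on a finitely
    supported distribution represented as a weighted list of states.
    Each of the N particles rings at rate 1, so a ring is of a uniformly
    chosen particle (prob 1/N) which then picks a direction (prob 1/2). *)
Definition step (N : nat) (ws : list (R * state)) : list (R * state) :=
  flat_map (fun p => map (fun s' => (fst p / (2 * INR N), s')) (moves (snd p))) ws.

Definition jump_dist (N : nat) (s0 : state) (n : nat) : list (R * state) :=
  Nat.iter n (step N) [(1, s0)].

Definition mass_sc_at (ws : list (R * state)) (x : Z) : R :=
  fold_right (fun p acc => (if Z.eq_dec (sc (snd p)) x then fst p else 0) + acc) 0 ws.

(** P(eta(t) = x): the continuous-time process with independent rate-1
    exponential clocks for each of the N particles is the jump chain run at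
    the ring times of a rate-N Poisson process (uniformization). *)
Definition sc_prob (N : nat) (s0 : state) (t : R) (x : Z) : R :=
  Series (fun n => exp (- (INR N * t)) * (INR N * t) ^ n / INR (fact n)
                   * mass_sc_at (jump_dist N s0 n) x).

Definition init_state (N : nat) (y : nat -> Z) : state :=
  mkState (map y (seq 1 (N - 1))) (y N).

Definition Cexp (z : C) : C := (exp (Re z) * cos (Im z), exp (Re z) * sin (Im z)).

Definition Cpowz (z : C) (k : Z) : C :=
  if (0 <=? k)%Z then Cpow z (Z.to_nat k) else Cinv (Cpow z (Z.to_nat (- k))).

(** (1/(2 pi i)) times the contour integral of f over the counterclockwise
    circle |xi| = r, parametrized by xi = r e^{i theta}, d xi = i xi d theta. *)
Definition circle_integral (f : C -> C) (r : R) : C :=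
  let xi := fun th : R => ((r * cos th)%R, (r * sin th)%R) : C in
  Cmult (Cinv (Cmult (RtoC (2 * PI)) Ci))
        (RInt (V := C_R_CompleteNormedModule)
              (fun th => Cmult (f (xi th)) (Cmult Ci (xi th))) 0 (2 * PI)).

(* In the symmetric process the second-class particle moves to each neighbouring
   site at rate 1/2 whatever the configuration: an empty site it enters itself,
   an occupied one is entered by exchanging with the first-class particle there.
   In the jump chain, run at the rings of a rate-[N t] Poisson clock, its
   position is therefore a lazy simple random walk stepping by -1 or +1 with
   probability 1/(2N) each.  The n-step law at [x] is the coefficient of
   [xi^(x - y N)] in [L(xi)^n], [L(xi) = (xi + 1/xi)/(2N) + (N-1)/N], which the
   integral over a circle [|xi| = r] extracts; averaging over the Poisson number
   of steps turns [L^n] into [exp (N t (L - 1)) = exp (t (xi/2 + 1/(2 xi) - 1))].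
   On the circle the exponential series converges uniformly, so the sum and the
   integral commute. *)

From Stdlib Require Import Reals ZArith List Lra Lia.
From Coquelicot Require Import Coquelicot.
Open Scope R_scope.

(* Coquelicot states equalities in the carrier of a normed module, where [ring]
   and [field] do not recognise the field [C]. *)
Ltac as_C_eq := match goal with |- ?u = ?v => change (@eq C u v) end.

(** * The second-class particle performs a lazy random walk *)

Definition Zdelta (a b : Z) : R := if Z.eq_dec a b then 1 else 0.

Definition Rsum (l : list R) : R := fold_right Rplus 0 l.

Lemma Rsum_app l1 l2 : Rsum (l1 ++ l2) = Rsum l1 + Rsum l2.
Proof. induction l1 as [|u l1 IH]; simpl; [ring | rewrite IH; ring]. Qed.

Lemma Rsum_map_plus {A} (f g : A -> R) l :
  Rsum (map (fun u => f u + g u) l) = Rsum (map f l) + Rsum (map g l).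
Proof. induction l as [|u l IH]; simpl; [ring | rewrite IH; ring]. Qed.

Lemma Rsum_map_const {A} c (l : list A) : Rsum (map (fun _ => c) l) = INR (length l) * c.
Proof.
  unfold Rsum. induction l as [|u l IH]; simpl map; simpl length; [simpl; ring |].
  rewrite S_INR. simpl. rewrite IH. ring.
Qed.

Lemma Rsum_map_scal {A} c (f : A -> R) l :
  Rsum (map (fun u => c * f u) l) = c * Rsum (map f l).
Proof. induction l as [|u l IH]; simpl; [ring | rewrite IH; ring]. Qed.

Lemma Rsum_map_flat_map {A B} (F : A -> list B) (f : B -> R) l :
  Rsum (map f (flat_map F l)) = Rsum (map (fun a => Rsum (map f (F a))) l).
Proof.
  induction l as [|a l IH]; simpl; [reflexivity |].
  rewrite map_app, Rsum_app, IH. reflexivity.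
Qed.

Lemma Rsum_map_ext_in {A} (f g : A -> R) l :
  (forall u, In u l -> f u = g u) -> Rsum (map f l) = Rsum (map g l).
Proof. intros H; f_equal; apply map_ext_in, H. Qed.

Lemma Rsum_indicator (l : list Z) p v : NoDup l ->
  Rsum (map (fun a => if Z.eq_dec a p then v else 0) l) = if in_dec Z.eq_dec p l then v else 0.
Proof.
  unfold Rsum. induction l as [|a l IH]; intros Hnd; simpl; [reflexivity |].
  inversion Hnd as [|? ? Ha Hnd']; subst. rewrite IH by exact Hnd'.
  destruct (in_dec Z.eq_dec p (a :: l)) as [Hin | Hin], (Z.eq_dec a p), (in_dec Z.eq_dec p l);
    simpl in Hin; subst; tauto || ring.
Qed.

Definition admissible (N : nat) (s : state) : Prop :=
  NoDup (fc s) /\ ~ In (sc s) (fc s) /\ length (fc s) = (N - 1)%nat.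

Lemma sc_move_first s a d :
  sc (move_first s a d) = if Z.eq_dec (a + d) (sc s) then a else sc s.
Proof.
  unfold move_first. destruct (Z.eq_dec (a + d) (sc s)); [reflexivity |].
  destruct (in_dec _ _ _); reflexivity.
Qed.

Lemma sc_move_second s d :
  sc (move_second s d) = if in_dec Z.eq_dec (sc s + d)%Z (fc s) then sc s else (sc s + d)%Z.
Proof. unfold move_second. destruct (in_dec _ _ _); reflexivity. Qed.

Lemma Rsum_moves_sc N s (g : Z -> R) : admissible N s ->
  Rsum (map (fun s' => g (sc s')) (moves s)) =
  g (sc s - 1)%Z + g (sc s + 1)%Z + 2 * INR (N - 1) * g (sc s).
Proof.
  intros [Hnd [Hsc Hlen]]. set (c := sc s).
  unfold moves. rewrite map_app, Rsum_app, Rsum_map_flat_map.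
  (* A first-class particle moves the second-class one only if they are adjacent. *)
  rewrite (Rsum_map_ext_in _ (fun a => 2 * g c +
      ((if Z.eq_dec a (c + 1) then g (c + 1)%Z - g c else 0) +
       (if Z.eq_dec a (c - 1) then g (c - 1)%Z - g c else 0)))).
  2: { intros a _. cbn [map Rsum fold_right]. rewrite !sc_move_first. fold c.
       destruct (Z.eq_dec (a + -1) c), (Z.eq_dec (a + 1) c),
         (Z.eq_dec a (c + 1)), (Z.eq_dec a (c - 1));
         subst; try lia; ring. }
  rewrite !Rsum_map_plus, Rsum_map_const, !Rsum_indicator, Hlen by exact Hnd.
  cbn [map Rsum fold_right]. rewrite !sc_move_second. fold c.
  replace (c + -1)%Z with (c - 1)%Z by lia.
  destruct (in_dec Z.eq_dec (c + 1)%Z (fc s)), (in_dec Z.eq_dec (c - 1)%Z (fc s)); ring.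
Qed.

Lemma NoDup_map_replace (l : list Z) a b : NoDup l -> ~ In b l ->
  NoDup (map (fun u => if Z.eq_dec u a then b else u) l).
Proof.
  intros Hnd Hb. apply NoDup_map_NoDup_ForallPairs; [| exact Hnd].
  intros u v Hu Hv. destruct (Z.eq_dec u a), (Z.eq_dec v a); congruence.
Qed.

Lemma in_map_replace (l : list Z) a b v :
  In v (map (fun u => if Z.eq_dec u a then b else u) l) -> v = b \/ (In v l /\ v <> a).
Proof.
  intros Hin. apply in_map_iff in Hin as [u [<- Hu]].
  destruct (Z.eq_dec u a); [left | right]; auto.
Qed.

Lemma admissible_move_first N s a d :
  admissible N s -> In a (fc s) -> admissible N (move_first s a d).
Proof.
  intros (Hnd & Hsc & Hlen) Ha. unfold move_first.
  destruct (Z.eq_dec (a + d) (sc s)) as [Hd | Hd];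
    [| destruct (in_dec Z.eq_dec (a + d)%Z (fc s)); [now repeat split |]];
    repeat split; cbn [fc sc]; rewrite ?length_map; auto using NoDup_map_replace;
    intros Hin; apply in_map_replace in Hin; intuition congruence.
Qed.

Lemma admissible_move_second N s d : admissible N s -> admissible N (move_second s d).
Proof.
  intros (Hnd & Hsc & Hlen). unfold move_second.
  destruct (in_dec Z.eq_dec (sc s + d)%Z (fc s)); now repeat split.
Qed.

Lemma admissible_moves N s s' : admissible N s -> In s' (moves s) -> admissible N s'.
Proof.
  intros Hs Hin. unfold moves in Hin. apply in_app_or in Hin as [Hin | Hin].
  - apply in_flat_map in Hin as [a [Ha Hin]].
    destruct Hin as [<- | [<- | []]]; apply admissible_move_first; assumption.
  - destruct Hin as [<- | [<- | []]]; apply admissible_move_second, Hs.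
Qed.

Definition wsum (ws : list (R * state)) (g : state -> R) : R :=
  Rsum (map (fun p => fst p * g (snd p)) ws).

Lemma mass_sc_at_wsum ws x : mass_sc_at ws x = wsum ws (fun s => Zdelta (sc s) x).
Proof.
  unfold mass_sc_at, wsum, Rsum, Zdelta.
  induction ws as [|p ws IH]; simpl; [reflexivity |]. rewrite IH.
  destruct (Z.eq_dec (sc (snd p)) x); ring.
Qed.

Lemma wsum_step N ws g :
  wsum (step N ws) g = wsum ws (fun s => / (2 * INR N) * Rsum (map g (moves s))).
Proof.
  unfold wsum, step. rewrite Rsum_map_flat_map. apply Rsum_map_ext_in. intros p _.
  rewrite map_map, <- Rsum_map_scal, <- Rsum_map_scal. apply Rsum_map_ext_in.
  intros s' _. cbn [fst snd]. unfold Rdiv. ring.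
Qed.

Lemma mass_sc_at_step N ws x : (1 <= N)%nat -> (forall p, In p ws -> admissible N (snd p)) ->
  mass_sc_at (step N ws) x =
  / (2 * INR N) * (mass_sc_at ws (x + 1) + mass_sc_at ws (x - 1))
  + INR (N - 1) / INR N * mass_sc_at ws x.
Proof.
  intros HN Hws. assert (HN0 : INR N <> 0) by (apply not_0_INR; lia).
  rewrite !mass_sc_at_wsum, wsum_step. unfold wsum.
  rewrite <- !Rsum_map_scal, <- Rsum_map_plus, <- Rsum_map_scal, <- Rsum_map_plus.
  apply Rsum_map_ext_in. intros p Hp.
  rewrite (Rsum_moves_sc N (snd p) (fun z => Zdelta z x)) by exact (Hws p Hp).
  unfold Zdelta. destruct (Z.eq_dec (sc (snd p) - 1) x), (Z.eq_dec (sc (snd p) + 1) x),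
    (Z.eq_dec (sc (snd p)) x), (Z.eq_dec (sc (snd p)) (x + 1)), (Z.eq_dec (sc (snd p)) (x - 1));
    try lia; field; exact HN0.
Qed.

Lemma admissible_jump_dist N s0 n : admissible N s0 ->
  forall p, In p (jump_dist N s0 n) -> admissible N (snd p).
Proof.
  intros H0. induction n as [|n IH]; cbn [jump_dist Nat.iter].
  - intros p [<- | []]. exact H0.
  - intros p Hp. unfold step in Hp. apply in_flat_map in Hp as [q [Hq Hp]].
    apply in_map_iff in Hp as [s' [<- Hs']]. exact (admissible_moves N _ _ (IH q Hq) Hs').
Qed.

Lemma increasing_lt (N : nat) (y : nat -> Z) :
  (forall i : nat, (1 <= i)%nat -> (i < N)%nat -> (y i < y (S i))%Z) ->
  forall i j, (1 <= i)%nat -> (i < j)%nat -> (j <= N)%nat -> (y i < y j)%Z.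
Proof.
  intros Hy i j Hi Hij. induction Hij as [| j Hij IH]; intros Hj.
  - apply Hy; lia.
  - specialize (IH ltac:(lia)). specialize (Hy j ltac:(lia) ltac:(lia)). lia.
Qed.

Lemma admissible_init_state N y : (1 <= N)%nat ->
  (forall i : nat, (1 <= i)%nat -> (i < N)%nat -> (y i < y (S i))%Z) ->
  admissible N (init_state N y).
Proof.
  intros HN Hy. pose proof (increasing_lt N y Hy) as Hlt.
  unfold admissible, init_state; cbn [fc sc]. repeat split.
  - apply NoDup_map_NoDup_ForallPairs; [| apply seq_NoDup].
    intros i j Hi Hj Heq. apply in_seq in Hi, Hj.
    destruct (Nat.lt_trichotomy i j) as [H | [H | H]]; [| exact H |];
      [specialize (Hlt i j) | specialize (Hlt j i)]; lia.
  - intros Hin. apply in_map_iff in Hin as [j [Hj Hin]]. apply in_seq in Hin.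
    specialize (Hlt j N). lia.
  - rewrite length_map, length_seq. reflexivity.
Qed.

Lemma mass_sc_at_jump_dist_0 N s0 x : mass_sc_at (jump_dist N s0 0) x = Zdelta (sc s0) x.
Proof. unfold Zdelta. simpl. destruct (Z.eq_dec (sc s0) x); ring. Qed.

Lemma mass_sc_at_jump_dist_S N s0 n x : (1 <= N)%nat -> admissible N s0 ->
  mass_sc_at (jump_dist N s0 (S n)) x =
  / (2 * INR N) * (mass_sc_at (jump_dist N s0 n) (x + 1) + mass_sc_at (jump_dist N s0 n) (x - 1))
  + INR (N - 1) / INR N * mass_sc_at (jump_dist N s0 n) x.
Proof. intros HN Hs0. apply mass_sc_at_step, admissible_jump_dist; assumption. Qed.

Lemma scal_C (c : R) (z : C) : @scal R_AbsRing C_R_NormedModule c z = Cmult (RtoC c) z.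
Proof.
  destruct z as [u v].
  change (@scal R_AbsRing C_R_NormedModule c (u, v)) with ((c * u)%R, (c * v)%R).
  apply injective_projections; simpl; ring.
Qed.

Lemma is_RInt_Cplus (f g : R -> C) a b (If Ig : C) :
  is_RInt (V := C_R_NormedModule) f a b If -> is_RInt (V := C_R_NormedModule) g a b Ig ->
  is_RInt (V := C_R_NormedModule) (fun t => Cplus (f t) (g t)) a b (Cplus If Ig).
Proof. apply (is_RInt_plus (V := C_R_NormedModule)). Qed.

Lemma is_RInt_Cmult_l (w : C) (f : R -> C) a b (If : C) :
  is_RInt (V := C_R_NormedModule) f a b If ->
  is_RInt (V := C_R_NormedModule) (fun t => Cmult w (f t)) a b (Cmult w If).
Proof.
  intros H. destruct w as [u v].
  apply (is_RInt_fct_extend_pair (U := R_NormedModule) (V := R_NormedModule)); cbn [Cmult fst snd].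
  - apply (is_RInt_minus (V := R_NormedModule)); apply (is_RInt_scal (V := R_NormedModule));
      [apply (is_RInt_fct_extend_fst (U := R_NormedModule))
      | apply (is_RInt_fct_extend_snd (V := R_NormedModule))]; exact H.
  - apply (is_RInt_plus (V := R_NormedModule)); apply (is_RInt_scal (V := R_NormedModule));
      [apply (is_RInt_fct_extend_snd (V := R_NormedModule))
      | apply (is_RInt_fct_extend_fst (U := R_NormedModule))]; exact H.
Qed.

Lemma norm_C (z : C) : @norm R_AbsRing C_R_NormedModule z = Cmod z.
Proof.
  destruct z as [u v]. unfold norm; simpl. unfold prod_norm, Cmod; simpl.
  unfold norm; simpl. unfold abs; simpl.
  rewrite !Rmult_1_r, <- !Rabs_mult, !(Rabs_pos_eq (_ * _)) by apply Rle_0_sqr. reflexivity.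
Qed.

Lemma sum_n_C (a : nat -> C_R_NormedModule) M :
  sum_n a M = (sum_n (fun n => fst (a n)) M, sum_n (fun n => snd (a n)) M).
Proof.
  induction M as [|M IH]; [rewrite !sum_O; destruct (a 0%nat); reflexivity |].
  rewrite !sum_Sn, IH. reflexivity.
Qed.

Lemma is_series_C (a : nat -> C) (l : C) :
  is_series (V := C_R_NormedModule) a l <->
  is_series (fun n => fst (a n)) (fst l) /\ is_series (fun n => snd (a n)) (snd l).
Proof.
  unfold is_series. split.
  - intros H. pose proof (proj1 (filterlim_locally _ _) H) as Hb.
    split; apply filterlim_locally; intros eps; generalize (Hb eps);
      apply filter_imp; intros M; rewrite sum_n_C; intros [H1 H2]; assumption.
  - intros [H1 H2]. apply filterlim_locally. intros eps.
    generalize (filter_and _ _ (proj1 (filterlim_locally _ _) H1 eps)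
                               (proj1 (filterlim_locally _ _) H2 eps)).
    apply filter_imp. intros M. rewrite sum_n_C. intros HM. exact HM.
Qed.

Lemma norm_is_series_le {K : AbsRing} {V : NormedModule K} (a : nat -> V) (b : nat -> R) la lb :
  is_series a la -> is_series b lb -> (forall n, norm (a n) <= b n) -> norm la <= lb.
Proof.
  intros Ha Hb Hab. change (Rbar_le (norm la) lb).
  apply (filterlim_le (F := eventually) (fun M => norm (sum_n a M)) (sum_n b)).
  - exists 0%nat. intros M _. eapply Rle_trans; [apply norm_sum_n_m | apply sum_n_m_le, Hab].
  - eapply filterlim_comp; [exact Ha | apply filterlim_norm].
  - exact Hb.
Qed.

Lemma plus_minus_cancel {G : AbelianGroup} (x y : G) : plus (minus x y) y = x.
Proof. unfold minus. rewrite <- plus_assoc, plus_opp_l. apply plus_zero_r. Qed.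

Lemma norm_series_tail_le {K : AbsRing} {V : NormedModule K} (a : nat -> V) (b : nat -> R) la lb :
  is_series a la -> is_series b lb -> (forall n, norm (a n) <= b n) ->
  forall M, norm (minus la (sum_n a M)) <= lb - sum_n b M.
Proof.
  intros Ha Hb Hab M.
  apply (norm_is_series_le (fun k => a (S M + k)%nat) (fun k => b (S M + k)%nat));
    [| | intros k; apply Hab]; apply is_series_incr_n; try lia; simpl.
  - rewrite (plus_minus_cancel (G := V)). exact Ha.
  - unfold plus; simpl. unfold Rminus. rewrite Rplus_assoc, Rplus_opp_l, Rplus_0_r. exact Hb.
Qed.

Lemma is_RInt_sum_n {V : NormedModule R_AbsRing} (f : nat -> R -> V) (I : nat -> V) a c :
  (forall n, is_RInt (f n) a c (I n)) ->
  forall M, is_RInt (fun t => sum_n (fun n => f n t) M) a c (sum_n I M).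
Proof.
  intros HI M. induction M as [|M IH].
  - rewrite sum_O. apply (is_RInt_ext (f 0%nat)); [| apply HI].
    intros t _. rewrite sum_O. reflexivity.
  - rewrite sum_Sn. apply (is_RInt_ext (fun t => plus (sum_n (fun n => f n t) M) (f (S M) t))).
    + intros t _. rewrite sum_Sn. reflexivity.
    + apply is_RInt_plus; [exact IH | apply HI].
Qed.

(* Weierstrass M-test: the partial sums converge uniformly, so they may be
   integrated termwise. *)
Lemma is_RInt_series {V : CompleteNormedModule R_AbsRing}
  (f : nat -> R -> V) (F : R -> V) (I : nat -> V) (b : nat -> R) (a c : R) :
  (forall n, is_RInt (f n) a c (I n)) ->
  (forall n t, norm (f n t) <= b n) -> ex_series b ->
  (forall t, is_series (fun n => f n t) (F t)) ->
  exists S, is_series I S /\ is_RInt F a c S.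
Proof.
  intros HI Hfb [B HB] HF.
  assert (Hunif : filterlim (fun M t => sum_n (fun n => f n t) M) eventually
                    (locally (T := fct_UniformSpace R V) F)).
  { apply (proj2 (filterlim_locally (U := fct_UniformSpace R V) _ F)). intros eps.
    generalize (proj1 (filterlim_locally _ _) HB eps). apply filter_imp.
    intros M HM t. apply (norm_compat1 (V := V)). rewrite <- norm_opp, opp_minus.
    eapply Rle_lt_trans; [apply (norm_series_tail_le _ b _ B (HF t) HB (fun n => Hfb n t)) |].
    change (Rabs (sum_n b M - B) < eps) in HM. rewrite Rabs_minus_sym in HM.
    eapply Rle_lt_trans; [apply Rle_abs | exact HM]. }
  destruct (filterlim_RInt _ a c eventually eventually_filter F _ (is_RInt_sum_n f I a c HI) Hunif)
    as [S [HS HFS]].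
  exists S. split; assumption.
Qed.

(** * The complex exponential series *)

Lemma is_series_exp (x : R) : is_series (fun n => x ^ n / INR (fact n)) (exp x).
Proof.
  eapply is_series_ext; [| apply (is_exp_Reals x)].
  intros n. simpl. rewrite pow_n_pow. unfold scal; simpl. unfold mult; simpl. unfold Rdiv. ring.
Qed.

Lemma CV_radius_exp_dominated (a : nat -> R) K :
  (forall n, Rabs (a n) <= K ^ n / INR (fact n)) -> forall x, Rbar_lt (Rabs x) (CV_radius a).
Proof.
  intros Ha x. set (y := Rabs x + 1).
  assert (Hdisk : CV_disk a y).
  { apply (ex_series_le (K := R_AbsRing) (V := R_CompleteNormedModule) _
             (fun n => (K * y) ^ n / INR (fact n))); [| eexists; apply is_series_exp].
    intros n. change (norm (Rabs (a n * y ^ n))) with (Rabs (Rabs (a n * y ^ n))).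
    rewrite Rabs_Rabsolu, Rabs_mult, Rpow_mult_distr, (Rabs_pos_eq (y ^ n))
      by (apply pow_le; unfold y; pose proof (Rabs_pos x); lra).
    unfold Rdiv. rewrite Rmult_assoc, (Rmult_comm (y ^ n)), <- Rmult_assoc.
    apply Rmult_le_compat_r; [apply pow_le; unfold y; pose proof (Rabs_pos x); lra | apply Ha]. }
  assert (Hy : Rbar_le y (CV_radius a)) by (apply (proj1 (Lub_Rbar_correct (CV_disk a))), Hdisk).
  destruct (CV_radius a) as [l | |]; simpl in *; unfold y in Hy; lra.
Qed.

Lemma ex_pseries_scal_inside c a x : Rbar_lt (Rabs x) (CV_radius a) -> ex_pseries (PS_scal c a) x.
Proof. intros H. apply ex_pseries_scal; [apply Rmult_comm | apply CV_radius_inside, H]. Qed.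

Lemma is_series_PSeries_1 (a : nat -> R) : Rbar_lt 1 (CV_radius a) -> is_series a (PSeries a 1).
Proof.
  intros Ha. eapply is_series_ext;
    [| apply PSeries_correct, CV_radius_inside; rewrite Rabs_R1; exact Ha].
  intros n. simpl. rewrite pow_n_pow, pow1. apply Rmult_1_l.
Qed.

Section ComplexExponential.

Variable z : C.

Let re (n : nat) : R := fst (Cpow z n) / INR (fact n).
Let im (n : nat) : R := snd (Cpow z n) / INR (fact n).

Let coef_bound (f : C -> R) : (forall w, Rabs (f w) <= Cmod w) ->
  forall n, Rabs (f (Cpow z n) / INR (fact n)) <= Cmod z ^ n / INR (fact n).
Proof.
  intros Hf n. rewrite Rabs_div, (Rabs_pos_eq (INR (fact n))), <- Cmod_pow by
    (apply pos_INR || apply INR_fact_neq_0).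
  apply Rmult_le_compat_r; [left; apply Rinv_0_lt_compat, INR_fact_lt_0 | apply Hf].
Qed.

Let re_radius s : Rbar_lt (Rabs s) (CV_radius re).
Proof.
  apply (CV_radius_exp_dominated _ (Cmod z)), coef_bound.
  intros w. eapply Rle_trans; [apply Rmax_l | apply Rmax_Cmod].
Qed.

Let im_radius s : Rbar_lt (Rabs s) (CV_radius im).
Proof.
  apply (CV_radius_exp_dominated _ (Cmod z)), coef_bound.
  intros w. eapply Rle_trans; [apply Rmax_r | apply Rmax_Cmod].
Qed.

Let PS_derive_re n : PS_derive re n = fst z * re n - snd z * im n.
Proof.
  unfold PS_derive, re, im. rewrite fact_simpl, mult_INR, Cpow_S.
  destruct z as [u v], (Cpow (u, v) n) as [p q]. cbn [Cmult fst snd].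
  pose proof (INR_fact_neq_0 n). pose proof (not_0_INR (S n) (Nat.neq_succ_0 n)).
  field. split; assumption.
Qed.

Let PS_derive_im n : PS_derive im n = fst z * im n + snd z * re n.
Proof.
  unfold PS_derive, re, im. rewrite fact_simpl, mult_INR, Cpow_S.
  destruct z as [u v], (Cpow (u, v) n) as [p q]. cbn [Cmult fst snd].
  pose proof (INR_fact_neq_0 n). pose proof (not_0_INR (S n) (Nat.neq_succ_0 n)).
  field. split; assumption.
Qed.

Let is_derive_re s :
  is_derive (PSeries re) s (fst z * PSeries re s - snd z * PSeries im s).
Proof.
  replace (fst z * PSeries re s - snd z * PSeries im s) with (PSeries (PS_derive re) s).
  - apply is_derive_PSeries, re_radius.
  - rewrite (PSeries_ext _ (PS_minus (PS_scal (fst z) re) (PS_scal (snd z) im)))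
      by (intros n; rewrite PS_derive_re; reflexivity).
    rewrite PSeries_minus, !PSeries_scal by (apply ex_pseries_scal_inside; auto). reflexivity.
Qed.

Let is_derive_im s :
  is_derive (PSeries im) s (fst z * PSeries im s + snd z * PSeries re s).
Proof.
  replace (fst z * PSeries im s + snd z * PSeries re s) with (PSeries (PS_derive im) s).
  - apply is_derive_PSeries, im_radius.
  - rewrite (PSeries_ext _ (PS_plus (PS_scal (fst z) im) (PS_scal (snd z) re)))
      by (intros n; rewrite PS_derive_im; reflexivity).
    rewrite PSeries_plus, !PSeries_scal by (apply ex_pseries_scal_inside; auto). reflexivity.
Qed.

(* [W1 + i W2] is [exp (- s z) E(s)] for the power series [E] of [exp (s z)];
   it is constant because [E' = z E]. *)
Let W1 s := exp (- (fst z * s)) * (cos (snd z * s) * PSeries re s + sin (snd z * s) * PSeries im s).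
Let W2 s := exp (- (fst z * s)) * (cos (snd z * s) * PSeries im s - sin (snd z * s) * PSeries re s).

Let is_derive_W1 s : is_derive W1 s 0.
Proof.
  unfold W1. auto_derive.
  - repeat split; eexists; [apply is_derive_re | apply is_derive_im].
  - change (fun x : R => PSeries re x) with (PSeries re).
    change (fun x : R => PSeries im x) with (PSeries im).
    rewrite (is_derive_unique _ _ _ (is_derive_re s)), (is_derive_unique _ _ _ (is_derive_im s)).
    ring.
Qed.

Let is_derive_W2 s : is_derive W2 s 0.
Proof.
  unfold W2. auto_derive.
  - repeat split; eexists; [apply is_derive_im | apply is_derive_re].
  - change (fun x : R => PSeries re x) with (PSeries re).
    change (fun x : R => PSeries im x) with (PSeries im).
    rewrite (is_derive_unique _ _ _ (is_derive_re s)), (is_derive_unique _ _ _ (is_derive_im s)).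
    ring.
Qed.

Let PSeries_re_im_1 :
  PSeries re 1 = exp (fst z) * cos (snd z) /\ PSeries im 1 = exp (fst z) * sin (snd z).
Proof.
  assert (E1 : W1 0 = W1 1)
    by (apply (eq_is_derive (V := R_NormedModule)); [intros; apply is_derive_W1 | lra]).
  assert (E2 : W2 0 = W2 1)
    by (apply (eq_is_derive (V := R_NormedModule)); [intros; apply is_derive_W2 | lra]).
  unfold W1, W2 in E1, E2. rewrite !PSeries_0 in E1, E2.
  assert (Hre0 : re 0 = 1) by (unfold re; simpl; field).
  assert (Him0 : im 0 = 0) by (unfold im; simpl; field).
  rewrite Hre0, Him0, !Rmult_0_r, !Rmult_1_r, Ropp_0, exp_0, cos_0, sin_0 in *.
  assert (Hexp : exp (fst z) * exp (- fst z) = 1)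
    by (rewrite <- exp_plus, Rplus_opp_r; apply exp_0).
  pose proof (sin2_cos2 (snd z)) as Hsc. unfold Rsqr in Hsc.
  set (c := cos (snd z)) in *. set (sn := sin (snd z)) in *.
  set (P := PSeries re 1) in *. set (Q := PSeries im 1) in *.
  assert (E1' : c * P + sn * Q = exp (fst z)).
  { rewrite <- (Rmult_1_l (c * P + sn * Q)), <- Hexp, Rmult_assoc, <- E1. ring. }
  assert (E2' : c * Q - sn * P = 0).
  { rewrite <- (Rmult_1_l (c * Q - sn * P)), <- Hexp, Rmult_assoc, <- E2. ring. }
  split.
  - transitivity (c * (c * P + sn * Q) - sn * (c * Q - sn * P)); [| rewrite E1', E2'; ring].
    transitivity (P * (sn * sn + c * c)); [rewrite Hsc |]; ring.
  - transitivity (sn * (c * P + sn * Q) + c * (c * Q - sn * P)); [| rewrite E1', E2'; ring].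
    transitivity (Q * (sn * sn + c * c)); [rewrite Hsc |]; ring.
Qed.

Lemma is_series_Cexp :
  is_series (V := C_R_NormedModule) (fun n => scal (/ INR (fact n)) (Cpow z n)) (Cexp z).
Proof.
  apply is_series_C. destruct PSeries_re_im_1 as [Hre Him]. unfold Cexp, Re, Im; cbn [fst snd].
  rewrite <- Hre, <- Him.
  split; (eapply is_series_ext; [| apply is_series_PSeries_1; rewrite <- Rabs_R1; auto]);
    intros n; simpl; unfold scal; simpl; unfold mult; simpl; apply Rmult_comm.
Qed.

End ComplexExponential.

(** * Fourier modes on a circle *)

Definition polar (rho phi : R) : C := (rho * cos phi, rho * sin phi).

Lemma polar_mult a b al be : Cmult (polar a al) (polar b be) = polar (a * b) (al + be).
Proof. unfold polar, Cmult; cbn [fst snd]. rewrite cos_plus, sin_plus. f_equal; ring. Qed.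

Lemma Cinv_polar a al : 0 < a -> Cinv (polar a al) = polar (/ a) (- al).
Proof.
  intros Ha. unfold Cinv, polar; cbn [fst snd]. rewrite cos_neg, sin_neg.
  assert (E : (a * cos al) ^ 2 + (a * sin al) ^ 2 = a * a).
  { pose proof (sin2_cos2 al) as H. unfold Rsqr in H. nra. }
  rewrite E. f_equal; field; lra.
Qed.

Lemma Cmod_polar a al : 0 <= a -> Cmod (polar a al) = a.
Proof.
  intros Ha. unfold Cmod, polar; cbn [fst snd].
  replace ((a * cos al) ^ 2 + (a * sin al) ^ 2) with (a ^ 2 * (sin al ^ 2 + cos al ^ 2)) by ring.
  rewrite <- !Rsqr_pow2, sin2_cos2, Rmult_1_r. apply sqrt_Rsqr, Ha.
Qed.

Lemma polar_neq_0 r th : 0 < r -> polar r th <> RtoC 0.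
Proof. intros Hr. apply Cmod_gt_0. rewrite Cmod_polar; lra. Qed.

Lemma Cpow_polar a al n : Cpow (polar a al) n = polar (a ^ n) (INR n * al).
Proof.
  induction n as [|n IH].
  - unfold polar. simpl. rewrite Rmult_0_l, cos_0, sin_0. apply injective_projections; simpl; ring.
  - rewrite Cpow_S, IH, polar_mult, S_INR. f_equal; ring.
Qed.

Definition fourier_mode (r : R) (k : Z) (th : R) : C := polar (powerRZ r k) (IZR k * th).

Lemma Cpowz_polar r th k : 0 < r -> Cpowz (polar r th) k = fourier_mode r k th.
Proof.
  intros Hr. unfold Cpowz, fourier_mode. destruct (Z.leb_spec 0 k) as [Hk | Hk].
  - rewrite Cpow_polar, pow_powerRZ, INR_IZR_INZ, Z2Nat.id by exact Hk. reflexivity.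
  - rewrite Cpow_polar, Cinv_polar by (apply pow_lt, Hr).
    rewrite pow_powerRZ, INR_IZR_INZ, Z2Nat.id by lia.
    rewrite <- powerRZ_neg', Z.opp_involutive, opp_IZR. f_equal. ring.
Qed.

Lemma fourier_mode_succ r k th :
  0 < r -> fourier_mode r (k + 1) th = Cmult (fourier_mode r k th) (polar r th).
Proof.
  intros Hr. unfold fourier_mode. rewrite polar_mult, powerRZ_add, plus_IZR by lra.
  f_equal; simpl; ring.
Qed.

Lemma fourier_mode_pred r k th :
  0 < r -> fourier_mode r (k - 1) th = Cmult (fourier_mode r k th) (Cinv (polar r th)).
Proof.
  intros Hr. unfold fourier_mode. rewrite Cinv_polar, polar_mult by exact Hr.
  replace (k - 1)%Z with (k + -1)%Z by lia.
  rewrite powerRZ_add, plus_IZR by lra. f_equal; simpl; field; lra.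
Qed.

Lemma Cmod_fourier_mode r k th : 0 < r -> Cmod (fourier_mode r k th) = powerRZ r k.
Proof. intros Hr. apply Cmod_polar. left. apply powerRZ_lt, Hr. Qed.

Lemma sin_IZR_mult_2PI k : sin (IZR k * (2 * PI)) = 0.
Proof. apply sin_eq_0_1. exists (2 * k)%Z. rewrite mult_IZR. ring. Qed.

Lemma cos_IZR_mult_2PI k : cos (IZR k * (2 * PI)) = 1.
Proof.
  replace (IZR k * (2 * PI)) with (2 * (IZR k * PI)) by ring.
  rewrite cos_2a_sin, sin_eq_0_1 by (exists k; reflexivity). ring.
Qed.

Lemma is_RInt_derive_periodic (F f : R -> R) T :
  (forall x, is_derive F x (f x)) -> (forall x, continuous f x) -> F T = F 0 ->
  is_RInt f 0 T 0.
Proof.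
  intros HF Hf HT.
  pose proof (is_RInt_derive F f 0 T (fun x _ => HF x) (fun x _ => Hf x)) as H.
  rewrite HT, minus_eq_zero in H. exact H.
Qed.

Lemma is_RInt_fourier_mode r k : 0 < r ->
  is_RInt (V := C_R_NormedModule) (fourier_mode r k) 0 (2 * PI) (RtoC (2 * PI * Zdelta k 0)).
Proof.
  intros Hr. unfold Zdelta, fourier_mode. destruct (Z.eq_dec k 0) as [-> | Hk].
  - replace (RtoC (2 * PI * 1)) with (@scal R_AbsRing C_R_NormedModule (2 * PI - 0) (RtoC 1))
      by (rewrite scal_C; apply injective_projections; simpl; ring).
    apply (is_RInt_ext (V := C_R_NormedModule) (fun _ => RtoC 1)); [| apply is_RInt_const].
    intros th _. unfold polar. simpl. rewrite Rmult_0_l, cos_0, sin_0.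
    apply injective_projections; simpl; ring.
  - assert (Hk' : IZR k <> 0) by (apply not_0_IZR, Hk).
    set (rho := powerRZ r k).
    replace (RtoC (2 * PI * 0)) with ((0, 0) : C) by (apply injective_projections; simpl; ring).
    apply (is_RInt_fct_extend_pair (U := R_NormedModule) (V := R_NormedModule));
      unfold polar; cbn [fst snd].
    + apply is_RInt_derive_periodic with (fun th => rho * sin (IZR k * th) / IZR k).
      * intros th. auto_derive; [exact I | field; exact Hk'].
      * intros th. apply (ex_derive_continuous (V := R_NormedModule)). auto_derive. exact I.
      * cbv beta. rewrite sin_IZR_mult_2PI, (Rmult_0_r (IZR k)), sin_0. reflexivity.
    + apply is_RInt_derive_periodic with (fun th => - rho * cos (IZR k * th) / IZR k).
      * intros th. auto_derive; [exact I | field; exact Hk'].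
      * intros th. apply (ex_derive_continuous (V := R_NormedModule)). auto_derive. exact I.
      * cbv beta. rewrite cos_IZR_mult_2PI, (Rmult_0_r (IZR k)), cos_0. reflexivity.
Qed.

(* The generating function [L(xi) = a (xi + 1/xi) + b] of one step of a lazy
   walk, at [xi = polar r th]. *)
Definition walk_symbol (a b r th : R) : C :=
  Cplus (Cmult (RtoC a) (Cplus (polar r th) (Cinv (polar r th)))) (RtoC b).

Lemma Cmod_walk_symbol_le a b r th : 0 < r ->
  Cmod (walk_symbol a b r th) <= Rabs a * (r + / r) + Rabs b.
Proof.
  intros Hr. unfold walk_symbol. eapply Rle_trans; [apply Cmod_triangle |].
  rewrite Cmod_mult, !Cmod_R. apply Rplus_le_compat_r, Rmult_le_compat_l; [apply Rabs_pos |].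
  eapply Rle_trans; [apply Cmod_triangle |].
  rewrite Cinv_polar, !Cmod_polar by (lra || (left; apply Rinv_0_lt_compat; lra)). lra.
Qed.

(** * Poissonized lazy walks *)

Section LazyWalk.

Variables (a b : R) (x0 : Z) (m : nat -> Z -> R).
Hypothesis m_0 : forall x, m 0%nat x = Zdelta x0 x.
Hypothesis m_S : forall n x, m (S n) x = a * (m n (x + 1)%Z + m n (x - 1)%Z) + b * m n x.
Variable r : R.
Hypothesis r_pos : 0 < r.

Lemma is_RInt_walk_coefficient n : forall k,
  is_RInt (V := C_R_NormedModule)
    (fun th => Cmult (fourier_mode r k th) (Cpow (walk_symbol a b r th) n)) 0 (2 * PI)
    (RtoC (2 * PI * m n (x0 + k))).
Proof.
  induction n as [|n IH]; intros k.
  - rewrite m_0. apply (is_RInt_ext (V := C_R_NormedModule) (fourier_mode r k)).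
    + intros th _. simpl. symmetry. apply Cmult_1_r.
    + replace (Zdelta x0 (x0 + k)) with (Zdelta k 0); [exact (is_RInt_fourier_mode r k r_pos) |].
      unfold Zdelta. destruct (Z.eq_dec k 0), (Z.eq_dec x0 (x0 + k)); reflexivity || lia.
  - pose proof (is_RInt_Cplus _ _ _ _ _ _
      (is_RInt_Cmult_l (RtoC a) _ _ _ _ (is_RInt_Cplus _ _ _ _ _ _ (IH (k + 1)%Z) (IH (k - 1)%Z)))
      (is_RInt_Cmult_l (RtoC b) _ _ _ _ (IH k))) as H.
    rewrite m_S. rewrite Z.add_assoc, Z.add_sub_assoc in H.
    replace (RtoC (2 * PI * _)) with
      (Cplus (Cmult (RtoC a) (Cplus (RtoC (2 * PI * m n (x0 + k + 1)%Z))
                                    (RtoC (2 * PI * m n (x0 + k - 1)%Z))))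
             (Cmult (RtoC b) (RtoC (2 * PI * m n (x0 + k)%Z))))
      by (apply injective_projections; simpl; ring).
    apply (is_RInt_ext (V := C_R_NormedModule)) with (2 := H). intros th _.
    rewrite fourier_mode_succ, fourier_mode_pred by exact r_pos.
    unfold walk_symbol. rewrite Cpow_S. as_C_eq. ring.
Qed.

Variables (lam : R) (k : Z).
Hypothesis lam_nonneg : 0 <= lam.

Let poisson n := exp (- lam) * lam ^ n / INR (fact n).
Let term n th : C := @scal R_AbsRing C_R_NormedModule (poisson n)
                       (Cmult (fourier_mode r k th) (Cpow (walk_symbol a b r th) n)).
Let limit th := Cmult (fourier_mode r k th)
                  (Cmult (RtoC (exp (- lam))) (Cexp (Cmult (RtoC lam) (walk_symbol a b r th)))).

Let is_series_term th : is_series (V := C_R_NormedModule) (fun n => term n th) (limit th).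
Proof.
  pose proof (is_series_scal (K := C_AbsRing) (V := C_NormedModule)
    (Cmult (fourier_mode r k th) (RtoC (exp (- lam)))) _ _
    (is_series_Cexp (Cmult (RtoC lam) (walk_symbol a b r th)))) as H.
  change (@scal C_AbsRing C_NormedModule ?u ?v) with (Cmult u v) in H.
  replace (Cmult (Cmult (fourier_mode r k th) (RtoC (exp (- lam))))
                 (Cexp (Cmult (RtoC lam) (walk_symbol a b r th))))
    with (limit th) in H by (unfold limit; ring).
  eapply is_series_ext; [| exact H].
  intros n. unfold term, poisson. rewrite !scal_C, Cpow_mult_l, <- RtoC_pow.
  unfold Rdiv. rewrite !RtoC_mult. as_C_eq. ring.
Qed.

Let K := Rabs a * (r + / r) + Rabs b.
Let bound n := powerRZ r k * (exp (- lam) * (lam * K) ^ n / INR (fact n)).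

Let ex_series_bound : ex_series bound.
Proof.
  exists (powerRZ r k * (exp (- lam) * exp (lam * K))).
  apply (is_series_scal_l (powerRZ r k) (fun n => exp (- lam) * _ ^ n / INR (fact n))).
  eapply is_series_ext;
    [| exact (is_series_scal_l (V := R_NormedModule) (exp (- lam)) _ _ (is_series_exp (lam * K)))].
  intros n. unfold scal; simpl; unfold mult; simpl. unfold Rdiv. ring.
Qed.

Let norm_term_le n th : @norm R_AbsRing C_R_NormedModule (term n th) <= bound n.
Proof.
  unfold term, bound.
  rewrite norm_C, scal_C, !Cmod_mult, Cmod_R, Cmod_pow, Cmod_fourier_mode by exact r_pos.
  assert (Hp : 0 <= poisson n).
  { unfold poisson. apply Rdiv_le_0_compat; [| apply INR_fact_lt_0].
    apply Rmult_le_pos; [left; apply exp_pos | apply pow_le, lam_nonneg]. }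
  assert (HL : Cmod (walk_symbol a b r th) ^ n <= K ^ n)
    by (apply pow_incr; split; [apply Cmod_ge_0 | apply Cmod_walk_symbol_le, r_pos]).
  pose proof (powerRZ_lt r k r_pos).
  rewrite Rabs_pos_eq by exact Hp.
  replace (exp (- lam) * (lam * K) ^ n / INR (fact n)) with (poisson n * K ^ n)
    by (unfold poisson; rewrite Rpow_mult_distr; unfold Rdiv; ring).
  rewrite <- Rmult_assoc, (Rmult_comm (poisson n)), Rmult_assoc.
  apply Rmult_le_compat_l; [lra |]. apply Rmult_le_compat_l; assumption.
Qed.

Lemma is_RInt_poisson_walk :
  is_RInt (V := C_R_NormedModule)
    (fun th => Cmult (fourier_mode r k th)
                 (Cmult (RtoC (exp (- lam))) (Cexp (Cmult (RtoC lam) (walk_symbol a b r th)))))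
    0 (2 * PI)
    (RtoC (2 * PI * Series (fun n => exp (- lam) * lam ^ n / INR (fact n) * m n (x0 + k)%Z))).
Proof.
  assert (HI : forall n, is_RInt (V := C_R_NormedModule) (term n) 0 (2 * PI)
                 (scal (poisson n) (RtoC (2 * PI * m n (x0 + k)%Z)))).
  { intros n. apply (is_RInt_scal (V := C_R_NormedModule)), is_RInt_walk_coefficient. }
  destruct (is_RInt_series (V := C_R_CompleteNormedModule) term limit _ bound 0 (2 * PI)
              HI norm_term_le ex_series_bound is_series_term) as [S [HS HFS]].
  apply is_series_C in HS as [Hre Him]; cbn [fst snd] in Hre, Him.
  replace (Series _) with (fst S / (2 * PI)).
  2: { symmetry. apply is_series_unique.
       eapply is_series_ext; [| exact (is_series_scal_r (/ (2 * PI)) _ _ Hre)].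
       intros n. simpl. unfold scal, poisson; simpl; unfold mult; simpl.
       field. split; [apply INR_fact_neq_0 | apply PI_neq0]. }
  replace (RtoC (2 * PI * _)) with S; [exact HFS |].
  assert (Him0 : snd S = 0).
  { rewrite <- (is_series_unique _ _ Him), (Series_ext _ (fun n => 0 * poisson n)), Series_scal_l.
    - ring.
    - intros n. simpl. unfold scal; simpl; unfold mult; simpl. ring. }
  apply injective_projections; simpl; [field; apply PI_neq0 | exact Him0].
Qed.

End LazyWalk.

Lemma Cexp_minus_real (w : C) (c : R) :
  Cexp (Cminus w (RtoC c)) = Cmult (RtoC (exp (- c))) (Cexp w).
Proof.
  destruct w as [u v]. unfold Cexp, Cminus, Cplus, Copp, Cmult, RtoC, Re, Im; cbn [fst snd].
  rewrite Ropp_0, Rplus_0_r, exp_plus. apply injective_projections; simpl; ring.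
Qed.

Lemma Cexp_uniformized (N : nat) t r th : (1 <= N)%nat -> 0 < r ->
  Cexp (Cmult (RtoC t)
          (Cminus (Cplus (Cinv (Cmult (RtoC 2) (polar r th))) (Cmult (polar r th) (RtoC (/ 2))))
                  (RtoC 1))) =
  Cmult (RtoC (exp (- (INR N * t))))
        (Cexp (Cmult (RtoC (INR N * t)) (walk_symbol (/ (2 * INR N)) (INR (N - 1) / INR N) r th))).
Proof.
  intros HN Hr. rewrite <- Cexp_minus_real. f_equal.
  assert (HN0 : INR N <> 0) by (apply not_0_INR; lia).
  assert (HNC : RtoC (INR N) <> RtoC 0) by (intros E; apply HN0; injection E; auto).
  pose proof (polar_neq_0 r th Hr) as Hxi.
  unfold walk_symbol. rewrite minus_INR by exact HN. simpl INR.
  rewrite (RtoC_inv (2 * INR N)), (RtoC_div (INR N - 1)), (RtoC_inv 2), RtoC_minus, !RtoC_mult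
    by (lra || exact HN0 || (apply Rmult_integral_contrapositive; split; lra)).
  field. split; assumption.
Qed.

Theorem corollary1p2 (N : nat) (y : nat -> Z) (t : R) :
  (1 <= N)%nat ->
  (forall i : nat, (1 <= i)%nat -> (i < N)%nat -> (y i < y (S i))%Z) ->
  0 <= t ->
  exists r0 : R, 0 < r0 /\
    forall r : R, 0 < r < r0 ->
    forall x : Z,
      RtoC (sc_prob N (init_state N y) t x) =
      circle_integral
        (fun xi : C =>
           Cmult (Cpowz xi (x - y N - 1)%Z)
                 (Cexp (Cmult (RtoC t)
                    (Cminus (Cplus (Cinv (Cmult (RtoC 2) xi)) (Cmult xi (RtoC (/ 2))))
                            (RtoC 1)))))
        r.
Proof.
  (* The argument works on every circle, so any [r0] will do. *)
  intros HN Hy Ht. exists 1. split; [lra |]. intros r [Hr _] x.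
  pose proof (admissible_init_state N y HN Hy) as Hs0.
  pose proof (is_RInt_poisson_walk (/ (2 * INR N)) (INR (N - 1) / INR N) (y N)
    (fun n => mass_sc_at (jump_dist N (init_state N y) n))
    (mass_sc_at_jump_dist_0 N _) (fun n x => mass_sc_at_jump_dist_S N _ n x HN Hs0)
    r Hr (INR N * t) (x - y N) (Rmult_le_pos _ _ (pos_INR N) Ht)) as H.
  replace (y N + (x - y N))%Z with x in H by lia. fold (sc_prob N (init_state N y) t x) in H.
  unfold circle_integral.
  rewrite (is_RInt_unique (V := C_R_CompleteNormedModule) _ 0 (2 * PI)
             (Cmult Ci (RtoC (2 * PI * sc_prob N (init_state N y) t x)))).
  - assert (HPI : RtoC PI <> RtoC 0) by (intros E; injection E; apply PI_neq0).
    rewrite !RtoC_mult. field. split; [exact Ci_nz | exact HPI].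
  - apply (is_RInt_ext (V := C_R_NormedModule)) with (2 := is_RInt_Cmult_l Ci _ _ _ _ H).
    intros th _. change ((r * cos th)%R, (r * sin th)%R) with (polar r th).
    rewrite (Cexp_uniformized N), Cpowz_polar, fourier_mode_pred by assumption.
    pose proof (polar_neq_0 r th Hr).
    as_C_eq. field. assumption.
Qed.
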